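(* Let $F\in\mathbb{R}[x_1,\dots,x_n]$ be a form. If there is a positive integer $k$ such that every form in $\mathrm{SDS}^{(k)}(F)$ has all coefficients nonnegative, then $F(X)\ge0$ for all $X\in\mathbb{R}_+^n$. If there is a positive integer $k$ and a form $G\in\mathrm{SDS}^{(k)}(F)$ with $G(1,\dots,1)<0$, then $F$ is not nonnegative on $\mathbb{R}_+^n$ (there is $X\in\mathbb{R}_+^n$ with $F(X)<0$).
   Context: $\mathbb{R}_+^n=\{(x_1,\dots,x_n): x_i\ge0\}$. $W_n$ is the $n\times n$ matrix with $(W_n)_{ij}=1/j$ for $i\le j$ and $0$ for $i>j$. For a permutation $[k_1\cdots k_n]$ of $1,\dots,n$, $P_{[k_1\cdots k_n]}$ is the permutation matrix with $1$ in positions $(i,k_i)$ and $0$ elsewhere, and $B_{[k_1\cdots k_n]}=P_{[k_1\cdots k_n]}W_n$; $PW_n$ denotes the set of these $n!$ matrices. For $m\ge1$, $\mathrm{SDS}^{(m)}(F)$ is the set of forms $F(B_{[\alpha_1]}\cdots B_{[\alpha_m]}X^{\mathrm{Tr}})$, $X=(x_1,\dots,x_n)$, as $B_{[\alpha_1]},\dots,B_{[\alpha_m]}$ range independently over $PW_n$. *)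

From mathcomp Require Import all_boot all_order all_algebra all_fingroup.
From mathcomp Require Export mpoly.
Set Implicit Arguments. Unset Strict Implicit. Unset Printing Implicit Defensive.
Import GRing.Theory Num.Theory.
Local Open Scope ring_scope.

(* W_n : (W_n)_{ij} = 1/j for i <= j, 0 otherwise (1-indexed);
   with 0-indexed ordinals this is 1/(j+1) for i <= j. *)
Definition Wmx (R : fieldType) (n : nat) : 'M[R]_n :=
  \matrix_(i < n, j < n) (if (i <= j)%N then (j.+1)%:R^-1 else 0).

(* P_[k_1..k_n] has a 1 at position (i, k_i): this is perm_mx s with s i = k_i. *)
Definition Bmx (R : fieldType) (n : nat) (s : 'S_n) : 'M[R]_n :=
  perm_mx s *m Wmx R n.

Definition Bprod (R : fieldType) (n : nat) (ss : seq 'S_n) : 'M[R]_n :=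
  foldr (fun s M => Bmx R s *m M) 1%:M ss.

Definition lin_subst (R : fieldType) (n : nat) (M : 'M[R]_n) (F : {mpoly R[n]})
  : {mpoly R[n]} :=
  F \mPo [tuple \sum_(j < n) M i j *: 'X_j | i < n].

Definition in_SDS (R : fieldType) (n m : nat) (F G : {mpoly R[n]}) : Prop :=
  exists ss : seq 'S_n, size ss = m /\ G = lin_subst (Bprod R ss) F.

(** Every matrix [B_s = P_s W_n] has nonnegative entries, and conversely every
    [y] in [R_+^n] is [B_s x] for some [x] in [R_+^n]: choose [s] sorting the
    coordinates of [y] decreasingly, say [y_i = z_(s i)] with [z] nonincreasing
    and [z_n = 0]; then [x_j = (j+1)(z_j - z_(j+1))] works, since [W_n] turns
    these weights back into the telescoping sums [z_k].  Iterating, the products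
    of [k] matrices of [PW_n] map [R_+^n] onto [R_+^n].  Since
    [G = F(B X^T)] satisfies [G(x) = F(B x)], nonnegative coefficients of every
    such [G] give [F >= 0] on [R_+^n], and [G(1,...,1) < 0] gives the point
    [B (1,...,1)^T] of [R_+^n] where [F] is negative. *)
From mathcomp Require Import all_boot all_order all_algebra all_fingroup.
From mathcomp Require Import mpoly.
Import Order.TTheory GRing.Theory Num.Theory.
Local Open Scope ring_scope.

Section NonnegativeMatrices.

Context {R : realFieldType}.

Definition nonneg_mx {m p} (A : 'M[R]_(m, p)) := forall i j, 0 <= A i j.

Lemma nonneg_mulmx m p q (A : 'M[R]_(m, p)) (B : 'M[R]_(p, q)) :
  nonneg_mx A -> nonneg_mx B -> nonneg_mx (A *m B).
Proof.
by move=> hA hB i j; rewrite mxE; apply: sumr_ge0 => l _; apply: mulr_ge0.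
Qed.

Lemma nonneg_scalar_mx n (a : R) : 0 <= a -> nonneg_mx (a%:M : 'M_n).
Proof. by move=> a_ge0 i j; rewrite mxE; case: (i == j). Qed.

Lemma nonneg_perm_mx n (s : 'S_n) : nonneg_mx (perm_mx s : 'M[R]_n).
Proof. by move=> i j; rewrite !mxE; case: (_ == _). Qed.

Lemma nonneg_Wmx n : nonneg_mx (Wmx R n).
Proof. by move=> i j; rewrite mxE; case: ifP; rewrite ?invr_ge0. Qed.

Lemma nonneg_Bprod {n} (ss : seq 'S_n) : nonneg_mx (Bprod R ss).
Proof.
elim: ss => [|s ss IH] /=; first exact: nonneg_scalar_mx.
apply: nonneg_mulmx IH; apply: nonneg_mulmx; [exact: nonneg_perm_mx | exact: nonneg_Wmx].
Qed.

End NonnegativeMatrices.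

Section CoveringTheOrthant.

Context {R : realFieldType} {n : nat}.

Lemma exists_perm_nonincr (y : 'I_n -> R) :
  exists s : 'S_n, forall i j, (s i <= s j)%N -> y j <= y i.
Proof.
pose leT i j := y j <= y i.
pose t := sort leT (enum 'I_n).
have t_total : total leT by move=> i j; exact: le_total.
have size_t : size t = n by rewrite size_sort size_enum_ord.
have mem_t i : i \in t by rewrite mem_sort mem_enum.
have index_lt i : (index i t < n)%N by rewrite -[X in (_ < X)%N]size_t index_mem.
have index_inj : injective (fun i => Ordinal (index_lt i)).
  by move=> i j /(congr1 val) /= eq_ij; rewrite -(nth_index i (mem_t i)) eq_ij nth_index.
exists (perm index_inj) => i j; rewrite !permE /= => le_ij.
have leT_trans : transitive leT by move=> a b c /= h1 h2; apply: le_trans h2 h1.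
have := sorted_leq_nth leT_trans (fun a => lexx (y a)) i (sort_sorted t_total (enum 'I_n)).
by move/(_ (index i t) (index j t)); rewrite !inE size_t !index_lt !nth_index //; apply.
Qed.

Lemma Wmx_mul_diff (z : nat -> R) : z n = 0 ->
  Wmx R n *m \col_(j < n) ((j.+1)%:R * (z j - z j.+1)) = \col_(i < n) z i.
Proof.
move=> zn; apply/matrixP => i k; rewrite ord1 !mxE.
transitivity (\sum_(i <= j < n) (z j - z j.+1)).
  rewrite big_geq_mkord [RHS]big_mkcond /=; apply: eq_bigr => j _; rewrite !mxE.
  by case: ifP => _; rewrite ?mul0r // mulrA mulVf ?mul1r ?pnatr_eq0.
rewrite (eq_bigr (fun j => - (z j.+1 - z j))) => [|j _]; last by rewrite opprB.
by rewrite sumrN telescope_sumr ?zn ?sub0r ?opprK // ltnW.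
Qed.

Lemma Bmx_cover {y : 'cV[R]_n} : nonneg_mx y ->
  exists s : 'S_n, exists2 x : 'cV[R]_n, nonneg_mx x & y = Bmx R s *m x.
Proof.
move=> y_ge0; have [s s_sorts] := exists_perm_nonincr (fun i => y i 0).
pose z k := oapp (fun k' => y ((s^-1)%g k') 0) 0 (insub k).
have z_s i : z (s i) = y i 0 by rewrite /z valK /= permK.
have z_ge0 k : 0 <= z k by rewrite /z; case: insub => //=.
have z_nonincr k : z k.+1 <= z k.
  rewrite /z; case: insubP => [l' lt_l val_l|] /=; last by rewrite z_ge0.
  have lt_k : (k < n)%N by apply: ltnW.
  by rewrite insubT /=; apply: s_sorts; rewrite !permKV val_l.
exists s; exists (\col_j ((j.+1)%:R * (z j - z j.+1))).
  by move=> j k; rewrite mxE mulr_ge0 ?subr_ge0.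
rewrite /Bmx -mulmxA Wmx_mul_diff; last by rewrite /z insubF ?ltnn.
by apply/matrixP => i k; rewrite ord1 -row_permE !mxE z_s.
Qed.

Lemma Bprod_cover k {y : 'cV[R]_n} : nonneg_mx y ->
  exists ss : seq 'S_n, exists2 x : 'cV[R]_n,
    size ss = k /\ nonneg_mx x & y = Bprod R ss *m x.
Proof.
elim: k y => [|k IH] y y_ge0; first by exists [::], y; rewrite //= mul1mx.
have [s [x1 x1_ge0 ->]] := Bmx_cover y_ge0.
have [ss [x [size_ss x_ge0] ->]] := IH _ x1_ge0.
exists (s :: ss), x; first by rewrite /= size_ss.
by rewrite /= mulmxA.
Qed.

End CoveringTheOrthant.

Lemma meval_lin_subst (R : realFieldType) n (M : 'M[R]_n) (F : {mpoly R[n]})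
    (v : 'cV[R]_n) :
  (lin_subst M F).@[fun j => v j 0] = F.@[fun i => (M *m v) i 0].
Proof.
rewrite /lin_subst comp_mpoly_meval; apply: meval_eq => i.
rewrite tnth_mktuple raddf_sum mxE; apply: eq_bigr => j _.
exact: (etrans (mevalZ _ _ _) (congr1 _ (mevalXU _ j))).
Qed.

Lemma meval_ge0 (R : realFieldType) n (G : {mpoly R[n]}) (v : 'I_n -> R) :
  (forall m, 0 <= G@_m) -> (forall i, 0 <= v i) -> 0 <= G.@[v].
Proof.
move=> G_ge0 v_ge0; rewrite mevalE; apply: sumr_ge0 => m _.
by rewrite mulr_ge0 // prodr_ge0 // => i _; rewrite exprn_ge0.
Qed.

Theorem lemma2p2 (R : realFieldType) (n : nat) (F : {mpoly R[n]})
  (hF : exists d : nat, F \is d.-homog) :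
  ((exists k : nat, (0 < k)%N /\
      (forall G : {mpoly R[n]}, in_SDS k F G -> forall m, 0 <= G@_m)) ->
    forall x : 'I_n -> R, (forall i, 0 <= x i) -> 0 <= F.@[x])
  /\
  ((exists (k : nat) (G : {mpoly R[n]}), (0 < k)%N /\ in_SDS k F G /\
       G.@[fun _ => 1] < 0) ->
    exists x : 'I_n -> R, (forall i, 0 <= x i) /\ F.@[x] < 0).
Proof.
split.
  move=> [k [_ SDS_ge0]] y y_ge0.
  have col_ge0 : nonneg_mx (\col_i y i) by move=> i j; rewrite mxE.
  have [ss [x [size_ss x_ge0] y_eq]] := Bprod_cover k col_ge0.
  have -> : F.@[y] = (lin_subst (Bprod R ss) F).@[fun j => x j 0].
    by rewrite meval_lin_subst -y_eq; apply: meval_eq => i; rewrite mxE.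
  by apply: meval_ge0 (fun i => x_ge0 i 0); apply: SDS_ge0; exists ss.
move=> [k [G [_ [[ss [_ G_def]] G1_lt0]]]].
pose one : 'cV[R]_n := const_mx 1.
have one_ge0 : nonneg_mx one by move=> i j; rewrite mxE.
exists (fun i => (Bprod R ss *m one) i 0); split.
  by move=> i; exact: nonneg_mulmx (nonneg_Bprod ss) one_ge0 i 0.
rewrite -(meval_lin_subst _ _ _ _ one) -G_def.
have one_1 : (fun j => one j 0) =1 (fun _ => 1) by move=> j; rewrite mxE.
by rewrite (meval_eq _ one_1).
Qed.
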